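(* For all $\alpha,\beta\in\mathbb{R}$, let $\mathfrak{g}=\mathfrak{g}(\alpha,\beta)$ with center $\mathfrak{z}$, and let $\ell=e_{11}^*\in\mathfrak{g}^*$ be the linear form with $\ell(e_{11})=1$ and $\ell(e_i)=0$ for $i\le 10$. Then $\mathfrak{g}(\ell)=\mathfrak{z}$.
   Context: For $\alpha,\beta\in\mathbb{R}$, $\mathfrak{g}(\alpha,\beta)$ is the $11$-dimensional real Lie algebra with basis $e_1,\dots,e_{11}$ whose nonzero brackets (up to skew-symmetry) are: $[e_1,e_i]=e_{i+1}$ for $2\le i\le 10$; $[e_2,e_3]=e_5+\alpha e_6$, $[e_2,e_4]=e_6+\alpha e_7$, $[e_2,e_5]=-e_7+(\alpha-\beta)e_8$, $[e_2,e_6]=-3e_8+(\alpha-2\beta)e_9$, $[e_2,e_7]=-2e_9-\tfrac14(5\alpha+7\beta)e_{10}+\tfrac1{16}(27\alpha^2+12\alpha\beta+\beta^2)e_{11}$, $[e_2,e_8]=2e_{10}-\tfrac14(23\alpha+\beta)e_{11}$, $[e_2,e_9]=-e_{11}$; $[e_3,e_4]=2e_7+\beta e_8$, $[e_3,e_5]=2e_8+\beta e_9$, $[e_3,e_6]=-e_9+\tfrac14(9\alpha-\beta)e_{10}-\tfrac1{16}(27\alpha^2+12\alpha\beta+\beta^2)e_{11}$, $[e_3,e_7]=-4e_{10}+\tfrac32(3\alpha-\beta)e_{11}$, $[e_3,e_8]=3e_{11}$; $[e_4,e_5]=3e_9-\tfrac14(9\alpha-5\beta)e_{10}+\tfrac1{16}(27\alpha^2+12\alpha\beta+\beta^2)e_{11}$,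 $[e_4,e_6]=3e_{10}-\tfrac14(9\alpha-5\beta)e_{11}$, $[e_4,e_7]=-7e_{11}$; $[e_5,e_6]=10e_{11}$; all other brackets $[e_i,e_j]$ with $i<j$ are zero. Its center is $\mathfrak{z}=\mathrm{span}\{e_{11}\}$. For $\ell\in\mathfrak{g}^*$, $\mathfrak{g}(\ell)=\{y\in\mathfrak{g}:\ell([x,y])=0 \text{ for all } x\in\mathfrak{g}\}$. *)

From HB Require Import structures.
From mathcomp Require Import all_boot all_order all_algebra.
Set Implicit Arguments. Unset Strict Implicit. Unset Printing Implicit Defensive.
Import Order.TTheory GRing.Theory Num.Theory.
Local Open Scope ring_scope.

(* Vectors of g(alpha,beta) are row vectors 'rV[R]_11; the basis vector e_k
   (k = 1..11 in the paper) is basis k = delta_mx 0 (k-1). *)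
Definition basis {R : realFieldType} (k : nat) : 'rV[R]_11 :=
  delta_mx 0 (inord k.-1).

(* Structure constants [e_i, e_j] for 1 <= i < j <= 11 (paper indexing). *)
Definition br_up {R : realFieldType} (a b : R) (i j : nat) : 'rV[R]_11 :=
  let e := @basis R in
  let q := (27 * a ^+ 2 + 12 * a * b + b ^+ 2) / 16 in
  if i == 1%N then (if (2 <= j <= 10)%N then e j.+1 else 0) else
  match i, j return 'rV[R]_11 with
  | 2%N, 3%N => e 5 + a *: e 6
  | 2%N, 4%N => e 6 + a *: e 7
  | 2%N, 5%N => - e 7 + (a - b) *: e 8
  | 2%N, 6%N => - (3 *: e 8) + (a - 2 * b) *: e 9
  | 2%N, 7%N => - (2 *: e 9) - ((5 * a + 7 * b) / 4) *: e 10 + q *: e 11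
  | 2%N, 8%N => 2 *: e 10 - ((23 * a + b) / 4) *: e 11
  | 2%N, 9%N => - e 11
  | 3%N, 4%N => 2 *: e 7 + b *: e 8
  | 3%N, 5%N => 2 *: e 8 + b *: e 9
  | 3%N, 6%N => - e 9 + ((9 * a - b) / 4) *: e 10 - q *: e 11
  | 3%N, 7%N => - (4 *: e 10) + (3 * (3 * a - b) / 2) *: e 11
  | 3%N, 8%N => 3 *: e 11
  | 4%N, 5%N => 3 *: e 9 - ((9 * a - 5 * b) / 4) *: e 10 + q *: e 11
  | 4%N, 6%N => 3 *: e 10 - ((9 * a - 5 * b) / 4) *: e 11
  | 4%N, 7%N => - (7 *: e 11)
  | 5%N, 6%N => 10 *: e 11
  | _, _ => 0
  end.

Definition br_basis {R : realFieldType} (a b : R) (i j : nat) : 'rV[R]_11 :=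
  if (i < j)%N then br_up a b i j
  else if (j < i)%N then - br_up a b j i else 0.

Definition lie_br {R : realFieldType} (a b : R) (x y : 'rV[R]_11) : 'rV[R]_11 :=
  \sum_(i < 11) \sum_(j < 11) (x 0 i * y 0 j) *: br_basis a b i.+1 j.+1.

Definition ell {R : realFieldType} (v : 'rV[R]_11) : R := v 0 (inord 10).

Definition stabilizer {R : realFieldType} (a b : R) (l : 'rV[R]_11 -> R)
  (y : 'rV[R]_11) : Prop :=
  forall x : 'rV[R]_11, l (lie_br a b x y) = 0.

Definition in_center_span {R : realFieldType} (y : 'rV[R]_11) : Prop :=
  exists t : R, y = t *: basis 11.

From HB Require Import structures.
From mathcomp Require Import all_boot all_order all_algebra.
From mathcomp Require Import perm zify.

(* Since [e_i, e_j]
   only involves e_k with k >= i + j, the central e_11 lies in its radical, and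
   on span(e_1, ..., e_10) its Gram matrix vanishes below the antidiagonal
   i + j = 11, whose entries are +-1, +-3, +-7, +-10.  Reversing the rows gives
   a triangular matrix with nonzero diagonal, so the form is nondegenerate on
   span(e_1, ..., e_10) and its radical g(ell) is exactly span(e_11). *)
Set Implicit Arguments. Unset Strict Implicit. Unset Printing Implicit Defensive.
Import Order.TTheory GRing.Theory Num.Theory.
Local Open Scope ring_scope.

Lemma antitrig_mulmx_eq0 (F : fieldType) n (A : 'M[F]_n) (v : 'cV[F]_n) :
    (forall i j : 'I_n, (n <= i + j)%N -> A i j = 0) ->
    (forall i : 'I_n, A (rev_ord i) i != 0) ->
  A *m v = 0 -> v = 0.
Proof.
move=> A_below A_antidiag Av0.
pose s : {perm 'I_n} := perm rev_ord_inj.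
have trigA : is_trig_mx (row_perm s A).
  by apply/is_trig_mxP => i j lt_ij; rewrite mxE permE A_below //=; lia.
have unitA : A \in unitmx.
  have : row_perm s A \in unitmx.
    rewrite unitmxE unitfE det_trig //; apply/prodf_neq0 => i _.
    by rewrite mxE permE.
  by rewrite row_permE unitmx_mul => /andP[].
by rewrite -(mulKmx unitA v) Av0 mulmx0.
Qed.

Lemma br_basis_eq0 (R : realFieldType) (a b : R) i j :
  (11 < i + j)%N -> br_basis a b i j = 0.
Proof.
rewrite /br_basis => ij_big.
have br_up0 k l : (11 < k + l)%N -> br_up a b k l = 0.
  move=> kl_big; rewrite /br_up; case: eqP => [k1|_].
    by rewrite k1 in kl_big; case: ifP => //; lia.
  by do 6?[case: k kl_big => [|k] kl_big //]; do 10?[case: l kl_big => [|l] kl_big //].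
case: ltnP => _; first exact: br_up0.
by case: ltnP => _ //; rewrite br_up0 ?oppr0 // addnC.
Qed.

Lemma ell_br_basis_antidiag (R : realFieldType) (a b : R) k :
  (0 < k < 11)%N -> ell (br_basis a b (11 - k) k) != 0.
Proof.
move=> /andP[k_gt0 k_lt11].
do 11?[case: k k_gt0 k_lt11 => [|k] k_gt0 k_lt11 //];
  by rewrite /br_basis /br_up /ell /basis /= !mxE /= eqxx /=
       ?(mulr1, opprK, oppr_eq0, pnatr_eq0, oner_eq0).
Qed.

Section Form.
Variables (R : realFieldType) (a b : R).

Definition ell_gram : 'M[R]_10 := \matrix_(i, j) ell (br_basis a b i.+1 j.+1).

Definition head_coords (y : 'rV[R]_11) : 'cV[R]_10 :=
  \col_j y 0 (widen_ord (leqnSn 10) j).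

Lemma ell_lie_br x y : ell (lie_br a b x y) =
  \sum_(i < 11) \sum_(j < 11) x 0 i * y 0 j * ell (br_basis a b i.+1 j.+1).
Proof.
rewrite /ell /lie_br summxE; apply: eq_bigr => i _; rewrite summxE.
by apply: eq_bigr => j _; rewrite mxE.
Qed.

Lemma ell_lie_br_basis (i : 'I_10) y :
  ell (lie_br a b (basis i.+1) y) = (ell_gram *m head_coords y) i 0.
Proof.
have basis_coord (k : 'I_11) :
    (basis i.+1 : 'rV[R]_11) 0 k = (k == widen_ord (leqnSn 10) i)%:R.
  by rewrite mxE eqxx -val_eqE /= inordK // ltnS ltnW.
rewrite ell_lie_br (bigD1 (widen_ord (leqnSn 10) i)) //= [X in _ + X]big1.
  rewrite addr0 big_ord_recr /= br_basis_eq0 ?addSn ?ltnS ?leq_addl //.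
  rewrite [ell 0]mxE mulr0 addr0 basis_coord eqxx [RHS]mxE.
  by apply: eq_bigr => j _; rewrite mul1r !mxE mulrC.
move=> k ne_ki; apply: big1 => j _.
by rewrite basis_coord (negPf ne_ki) !mul0r.
Qed.

Lemma lie_br_center x t : lie_br a b x (t *: basis 11) = 0.
Proof.
apply: big1 => i _; apply: big1 => j _; rewrite !mxE eqxx /=.
have [->|_] := eqVneq j (inord 10).
  by rewrite inordK // br_basis_eq0 ?scaler0 // addSn ltnS leq_addl.
by rewrite !mulr0 scale0r.
Qed.

Lemma head_coords_eq0 y : head_coords y = 0 -> in_center_span y.
Proof.
move=> /matrixP y_head; exists (y 0 (inord 10)); apply/rowP => j.
rewrite !mxE eqxx /=; have [->|ne_j] := eqVneq j (inord 10); first by rewrite mulr1.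
have j_lt10 : (j < 10)%N.
  by move: ne_j (ltn_ord j); rewrite -val_eqE /= inordK //; lia.
have := y_head (Ordinal j_lt10) 0; rewrite !mxE mulr0.
by have -> : widen_ord (leqnSn 10) (Ordinal j_lt10) = j by apply: val_inj.
Qed.

End Form.

Theorem proposition4p3 (R : realFieldType) (a b : R) (y : 'rV[R]_11) :
  stabilizer a b ell y <-> in_center_span y.
Proof.
split=> [stab_y | [t ->] x]; last by rewrite lie_br_center /ell mxE.
apply: head_coords_eq0; apply: (@antitrig_mulmx_eq0 _ _ (ell_gram a b)).
- move=> i j ij_big; rewrite mxE br_basis_eq0; first by rewrite /ell mxE.
  by rewrite addSn addnS; exact: ij_big.
- by move=> i; rewrite mxE /= -subSn // ell_br_basis_antidiag //= ltnS ltn_ord.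
- by apply/colP => i; rewrite -ell_lie_br_basis mxE.
Qed.
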